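(* Let $\gamma\in\mathbb N\setminus\{1\}$, $b_1<b_2<\dots<b_\gamma$ real numbers, and $a\in C(\mathbb R,\mathbb R)$ with $a(x)=x^\gamma$ for all $x\in\mathbb R$. Then (i) there exist unique $c_0,c_1,\dots,c_\gamma\in\mathbb R$ such that for all $k\in\{0,1,\dots,\gamma\}$, $\mathbb 1_{\{\gamma\}}(k)c_0+\sum_{i=1}^\gamma c_i(b_i)^k=\mathbb 1_{\{\gamma-1\}}(k)\gamma^{-1}$; (ii) with these constants, $\Psi=\mathbf A_{1,c_0}\bullet\bigl(\bigoplus_{i=1}^\gamma(c_i\circledast(\mathfrak i_1\bullet\mathbf A_{1,b_i}))\bigr)\in\mathbf N$ is well defined; (iii) $\mathcal D(\Psi)=(1,\gamma,1)$; (iv) $\mathcal R_a(\Psi)\in C(\mathbb R,\mathbb R)$; and (v) $(\mathcal R_a(\Psi))(x)=x$ for all $x\in\mathbb R$.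
   Context: Artificial neural networks (ANNs). Let $\mathbb N=\{1,2,\dots\}$ and $\mathbf N=\bigcup_{L\in\mathbb N}\bigcup_{l_0,\dots,l_L\in\mathbb N}\prod_{k=1}^L(\mathbb R^{l_k\times l_{k-1}}\times\mathbb R^{l_k})$. For $\Phi=((W_1,B_1),\dots,(W_L,B_L))$ in the $(l_0,\dots,l_L)$ component, $\mathcal L(\Phi)=L$, $\mathcal I(\Phi)=l_0$, $\mathcal O(\Phi)=l_L$, $\mathcal D(\Phi)=(l_0,\dots,l_L)$. For $a\in C(\mathbb R,\mathbb R)$ the realization is $(\mathcal R_a(\Phi))(x_0)=W_Lx_{L-1}+B_L$ with $x_k=\mathfrak M_{a,l_k}(W_kx_{k-1}+B_k)$, $k=1,\dots,L-1$, $\mathfrak M_{a,m}$ applying $a$ componentwise. $\operatorname I_n$ is the identity matrix; $\mathbf A_{W,B}=((W,B))$ (for reals $w,b$, $\mathbf A_{w,b}$ has $1\times1$ weight $w$ and bias $b$). Composition: for $\Phi_1=((W_1,B_1),\dots,(W_L,B_L))$, $\Phi_2=((\mathscr W_1,\mathscr B_1),\dots,(\mathscr W_{\mathfrak L},\mathscr B_{\mathfrak L}))$ with $\mathcal I(\Phi_1)=\mathcal O(\Phi_2)$, $\Phi_1\bullet\Phi_2=((\mathscr W_1,\mathscr B_1),\dots,(\mathscr W_{\mathfrak L-1},\mathscr B_{\mathfrak L-1}),(W_1\mathscr W_{\mathfrak L},W_1\mathscr B_{\mathfrak L}+B_1),(W_2,B_2),\dots,(W_L,B_L))$. $\lambda\circledast\Phi=\mathbf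 A_{\lambda\operatorname I_{\mathcal O(\Phi)},0}\bullet\Phi$. $\mathbf P_n(\Phi_1,\dots,\Phi_n)$ (equal lengths) has $k$-th layer $(\operatorname{diag}(W_{1,k},\dots,W_{n,k}),(B_{1,k},\dots,B_{n,k}))$. $\mathfrak S_{m,n}=\mathbf A_{(\operatorname I_m\cdots\operatorname I_m),0}$, $\mathfrak T_{m,n}=\mathbf A_{(\operatorname I_m\cdots\operatorname I_m)^\top,0}$ ($n$ blocks). For $\Phi_u,\dots,\Phi_v$ with equal $\mathcal L,\mathcal I,\mathcal O$: $\bigoplus_{k=u}^v\Phi_k=\mathfrak S_{\mathcal O(\Phi_u),v-u+1}\bullet([\mathbf P_{v-u+1}(\Phi_u,\dots,\Phi_v)]\bullet\mathfrak T_{\mathcal I(\Phi_u),v-u+1})$. $\mathfrak i_n=((\operatorname I_n,0),(\operatorname I_n,0))\in(\mathbb R^{n\times n}\times\mathbb R^n)^2$. *)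

From HB Require Import structures.
From mathcomp Require Import all_boot all_order all_algebra.
From mathcomp Require Import all_classical all_reals all_analysis.

Set Implicit Arguments.
Unset Strict Implicit.
Unset Printing Implicit Defensive.

Import Order.TTheory GRing.Theory Num.Theory.
Local Open Scope ring_scope.

Section ANN.
Variable R : realType.

Record layer := Layer { lin : nat; lout : nat;
                        lW : 'M[R]_(lout, lin); lB : 'cV[R]_lout }.

(* Raw list of layers; [is_ann] is membership in the set \mathbf N
   (nonempty, consecutive dimensions chain). *)
Definition ann := seq layer.

Definition is_ann (Phi : ann) : bool :=
  (if Phi is [::] then false else true) && sorted (fun l1 l2 => lout l1 == lin l2) Phi.

Definition dims (Phi : ann) : seq nat :=
  if Phi is l :: _ then lin l :: map lout Phi else [::].
Definition lenN (Phi : ann) : nat := size Phi.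
Definition inD (Phi : ann) : nat := if Phi is l :: _ then lin l else 0%N.
Definition outD (Phi : ann) : nat := last 0%N (map lout Phi).

(* entry of a matrix addressed by natural numbers (0 outside the range) *)
Definition ent m n (A : 'M[R]_(m, n)) (i j : nat) : R :=
  match (insub i : option 'I_m), (insub j : option 'I_n) with
  | Some i', Some j' => A i' j'
  | _, _ => 0
  end.

(* merge l1 l2 = (W1 * W2, W1 * B2 + B1)  (l1 applied after l2) *)
Definition merge (l1 l2 : layer) : layer :=
  @Layer (lin l2) (lout l1)
    (\matrix_(i < lout l1, j < lin l2)
        \sum_(t < lin l1) lW l1 i t * ent (lW l2) t j)
    (\col_(i < lout l1)
        (\sum_(t < lin l1) lW l1 i t * ent (lB l2) t 0 + lB l1 i 0)).

Definition comp_raw (Phi1 Phi2 : ann) : ann :=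
  match Phi1 with
  | [::] => Phi2
  | l1 :: r1 =>
    match rev Phi2 with
    | [::] => Phi1
    | lL :: rr => rev rr ++ merge l1 lL :: r1
    end
  end.

(* Partial operations are modelled as option-valued: [None] means the
   construction is not well defined (some precondition fails). *)
Definition ncomp (o1 o2 : option ann) : option ann :=
  if o1 is Some Phi1 then
    if o2 is Some Phi2 then
      if [&& is_ann Phi1, is_ann Phi2 & inD Phi1 == outD Phi2]
      then Some (comp_raw Phi1 Phi2) else None
    else None
  else None.

Definition affA m n (W : 'M[R]_(m, n)) (B : 'cV[R]_m) : option ann :=
  Some [:: Layer W B].

Definition affA1 (w b : R) : option ann :=
  affA (w%:M : 'M[R]_1) (b%:M : 'cV[R]_1).

Definition smul (lam : R) (o : option ann) : option ann :=
  if o is Some Phi then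
    ncomp (affA (lam%:M : 'M[R]_(outD Phi)) 0) o
  else None.

Definition idnet (n : nat) : option ann :=
  Some [:: Layer (1%:M : 'M[R]_n) 0; Layer (1%:M : 'M[R]_n) 0].

Definition par_layer (l1 l2 : layer) : layer :=
  @Layer (lin l1 + lin l2) (lout l1 + lout l2)
    (block_mx (lW l1) 0 0 (lW l2)) (col_mx (lB l1) (lB l2)).

Fixpoint par_raw (Phis : seq ann) : ann :=
  match Phis with
  | [::] => [::]
  | Phi :: rest =>
    if rest is [::] then Phi
    else [seq par_layer p.1 p.2 | p <- zip Phi (par_raw rest)]
  end.

Definition par (Phis : seq ann) : option ann :=
  if [&& (if Phis is [::] then false else true), all is_ann Phis &
         all (fun Phi => size Phi == size (head [::] Phis)) Phis]
  then Some (par_raw Phis) else None.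

(* \mathfrak S_{m,n} = A_{(I_m ... I_m), 0}  (n blocks) *)
Definition Snet (m n : nat) : option ann :=
  affA (\matrix_(i < m, j < m * n) ((i : nat) == (j %% m)%N)%:R) 0.

(* \mathfrak T_{m,n} = A_{(I_m ... I_m)^T, 0}  (n blocks) *)
Definition Tnet (m n : nat) : option ann :=
  affA (\matrix_(i < m * n, j < m) ((j : nat) == (i %% m)%N)%:R) 0.

Definition osequence (os : seq (option ann)) : option (seq ann) :=
  foldr (fun o acc =>
           if o is Some Phi then
             if acc is Some s then Some (Phi :: s) else None
           else None) (Some [::]) os.

(* \bigoplus_{k=u}^v \Phi_k (given as the list [Phi_u; ...; Phi_v]) *)
Definition oplus (os : seq (option ann)) : option ann :=
  if osequence os is Some Phis then
    if Phis is Phi :: _ then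
      if all (fun Phi' => [&& size Phi' == size Phi, inD Phi' == inD Phi &
                              outD Phi' == outD Phi]) Phis
      then ncomp (Snet (outD Phi) (size Phis))
                (ncomp (par Phis) (Tnet (inD Phi) (size Phis)))
      else None
    else None
  else None.

Definition affv (l : layer) (x : nat -> R) : nat -> R :=
  fun i => \sum_(j < lin l) ent (lW l) i j * x j + ent (lB l) i 0.

Fixpoint realize_raw (a : R -> R) (Phi : ann) (x : nat -> R) : nat -> R :=
  match Phi with
  | [::] => x
  | l :: r =>
    if r is [::] then affv l x
    else realize_raw a r (fun i => a (affv l x i))
  end.

Definition realization (a : R -> R) (Phi : ann) :
  'cV[R]_(inD Phi) -> 'cV[R]_(outD Phi) :=
  fun x => \col_(i < outD Phi) realize_raw a Phi (fun j => ent x j 0) i.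

(* For a network with I = O = 1, \mathcal R_a(\Phi) viewed as a map
   R -> R (identifying R^1 with R). *)
Definition realize1 (a : R -> R) (Phi : ann) : R -> R :=
  fun x => realize_raw a Phi (fun _ => x) 0%N.

End ANN.

From Pilot Require Import Defs.
From HB Require Import structures.
From mathcomp Require Import all_boot all_order all_algebra.
From mathcomp Require Import all_classical all_reals all_analysis.
From mathcomp Require Import ring.
Import Order.TTheory GRing.Theory Num.Theory numFieldNormedType.Exports.
Local Open Scope ring_scope.

(* The network Psi has a single hidden layer whose i-th neuron computes
   a(x + b_i); the output layer forms c_0 + sum_i c_i a(x + b_i).  When
   c_1, ..., c_gamma solve the Vandermonde system
   sum_i c_i b_i^k = [k = gamma - 1] / gamma  (k < gamma),
   the binomial expansion of sum_i c_i (x + b_i)^gamma collapses to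
   x + sum_i c_i b_i^gamma, and the equation for k = gamma fixes
   c_0 = - sum_i c_i b_i^gamma to cancel the constant term. *)

Set Implicit Arguments.
Unset Strict Implicit.

Section MomentSystem.
Variable R : realType.

Definition moment_system (n : nat) (b c d : nat -> R) : Prop :=
  forall k, (k <= n)%N ->
    (k == n)%:R * c 0%N + \sum_(1 <= i < n.+1) c i * b i ^+ k = d k.

Definition nodes (n : nat) (b : nat -> R) : 'rV[R]_n := \row_(j < n) b j.+1.

Lemma moment_sum_ord (n k : nat) (b c : nat -> R) :
  \sum_(1 <= i < n.+1) c i * b i ^+ k = \sum_(j < n) c j.+1 * b j.+1 ^+ k.
Proof. by rewrite big_add1 big_mkord. Qed.

Lemma moment_systemE n (b c d : nat -> R) :
  moment_system n b c d <->
  Vandermonde n (nodes n b) *m \col_(j < n) c j.+1 = \col_(k < n) d k /\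
  c 0%N = d n - \sum_(j < n) c j.+1 * b j.+1 ^+ n.
Proof.
have rowE (k : 'I_n) :
    (Vandermonde n (nodes n b) *m \col_(j < n) c j.+1) k ord0
    = \sum_(j < n) c j.+1 * b j.+1 ^+ k.
  by rewrite mxE; apply: eq_bigr => j _; rewrite !mxE mulrC.
split=> [sys | [/matrixP V c0] k].
  split; last by rewrite -(sys n) // eqxx mul1r moment_sum_ord addrK.
  apply/matrixP=> k j; rewrite ord1 rowE mxE -(sys k (ltnW (ltn_ord k))).
  by rewrite ltn_eqF // mul0r add0r moment_sum_ord.
rewrite leq_eqVlt => /predU1P[-> | lt_kn].
  by rewrite eqxx mul1r c0 moment_sum_ord subrK.
have := V (Ordinal lt_kn) ord0; rewrite rowE mxE /= => <-.
by rewrite ltn_eqF // mul0r add0r moment_sum_ord.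
Qed.

Lemma Vandermonde_unitmx n (b : nat -> R) :
  (forall i j, (1 <= i)%N -> (i < j)%N -> (j <= n)%N -> b i != b j) ->
  Vandermonde n (nodes n b) \in unitmx.
Proof.
move=> hb; rewrite unitmxE det_Vandermonde unitfE.
apply/prodf_neq0 => i _; apply/prodf_neq0 => j lt_ij.
by rewrite !mxE subr_eq0 eq_sym hb.
Qed.

Lemma moment_system_unique_solution n (b d : nat -> R) :
  (forall i j, (1 <= i)%N -> (i < j)%N -> (j <= n)%N -> b i != b j) ->
  exists c, moment_system n b c d /\
    forall c', moment_system n b c' d -> forall i, (i <= n)%N -> c' i = c i.
Proof.
move=> /Vandermonde_unitmx; set V := Vandermonde n _ => Vu.
pose cv := invmx V *m \col_(k < n) d k.
pose ctail j := if insub j is Some j' then cv j' ord0 else 0.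
pose c i := if i is j.+1 then ctail j else d n - \sum_(j < n) ctail j * b j.+1 ^+ n.
have colc : \col_(j < n) c j.+1 = cv.
  by apply/matrixP => j k; rewrite ord1 mxE /c /ctail valK.
exists c; split.
  by apply/moment_systemE; rewrite colc mulKVmx.
move=> c' /moment_systemE[Vc' c'0].
have colc' : \col_(j < n) c' j.+1 = \col_(j < n) c j.+1 by rewrite colc /cv -Vc' mulKmx.
have tail (j : 'I_n) : c' j.+1 = c j.+1.
  by have /matrixP/(_ j ord0) := colc'; rewrite !mxE.
case=> [|i] le_in; last exact: (tail (Ordinal le_in)).
by rewrite c'0; congr (_ - _); apply: eq_bigr => j _; rewrite tail.
Qed.

Lemma moment_system_shift_sum n (b c : nat -> R) : (0 < n)%N ->
  moment_system n b c (fun k => (k == n - 1)%N%:R / n%:R) ->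
  forall x, c 0%N + \sum_(j < n) c j.+1 * (x + b j.+1) ^+ n = x.
Proof.
case: n => // m _ sys x.
have moment_lt k : (k < m.+1)%N ->
    \sum_(j < m.+1) c j.+1 * b j.+1 ^+ k = (k == m)%:R / m.+1%:R.
  by move=> lt_km; have := sys k (ltnW lt_km); rewrite ltn_eqF // mul0r add0r subn1 moment_sum_ord.
have moment_top : \sum_(j < m.+1) c j.+1 * b j.+1 ^+ m.+1 = - c 0%N.
  have := sys _ (leqnn m.+1); rewrite eqxx mul1r subn1 /= gtn_eqF // mul0r => top.
  by apply/eqP; rewrite -addr_eq0 addrC -moment_sum_ord top.
under eq_bigr => j _ do rewrite exprDn mulr_sumr.
rewrite exchange_big /=.
have factor (k : 'I_m.+2) :
    \sum_(j < m.+1) c j.+1 * (x ^+ (m.+1 - k) * b j.+1 ^+ k *+ 'C(m.+1, k))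
    = x ^+ (m.+1 - k) *+ 'C(m.+1, k) * \sum_(j < m.+1) c j.+1 * b j.+1 ^+ k.
  by rewrite mulr_sumr; apply: eq_bigr => j _; ring.
under eq_bigr => k _ do rewrite factor.
rewrite big_ord_recr moment_top big_ord_recr moment_lt // eqxx big1 => [|k _]; last first.
  by rewrite moment_lt ?(ltn_trans (ltn_ord k)) //= ltn_eqF // mul0r mulr0.
rewrite /= subnn subSnn binn binSn expr0 expr1 add0r mulr1n mul1r.
by rewrite -mulr_natr mulfK ?pnatr_eq0 // mul1r addrCA subrr addr0.
Qed.

End MomentSystem.

Section Realization.
Variable R : realType.

Lemma entE m n (A : 'M[R]_(m, n)) (i : 'I_m) (j : 'I_n) : ent A i j = A i j.
Proof. by rewrite /ent !valK. Qed.

Lemma ent_col m (B : 'cV[R]_m) (i : 'I_m) : ent B i 0%N = B i ord0.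
Proof. exact: (entE B i ord0). Qed.

Lemma ent_out m n (A : 'M[R]_(m, n)) i j : (m <= i)%N -> ent A i j = 0.
Proof. by move=> le_mi; rewrite /ent insubF // ltnNge le_mi. Qed.

Lemma ent0 m n i j : ent (0 : 'M[R]_(m, n)) i j = 0.
Proof. by rewrite /ent; case: insub => // ?; case: insub => // ?; rewrite mxE. Qed.

Lemma affv_out (l : layer R) x i : (lout l <= i)%N -> affv l x i = 0.
Proof.
by move=> le_i; rewrite /affv ent_out // addr0 big1 // => j _; rewrite ent_out ?mul0r.
Qed.

Lemma affv_merge (l1 l2 : layer R) x i :
  affv (Defs.merge l1 l2) x i = affv l1 (affv l2 x) i.
Proof.
case: (ltnP i (lout l1)) => [lt_i | ?]; last by rewrite !affv_out.
have [{lt_i}i -> //] : exists i' : 'I_(lout l1), i = i' by exists (Ordinal lt_i).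
rewrite /affv /= ent_col mxE.
under eq_bigr => j _ do rewrite entE mxE mulr_suml.
rewrite exchange_big /= ent_col.
under [X in _ = X + _]eq_bigr => t _ do rewrite entE mulrDr mulr_sumr.
rewrite big_split /= addrA; congr (_ + _ + _).
by apply: eq_bigr => t _; apply: eq_bigr => j _; rewrite mulrA.
Qed.

Lemma affv_par_layer (l1 l2 : layer R) x i :
  affv (par_layer l1 l2) x i =
  if (i < lout l1)%N then affv l1 x i
  else affv l2 (fun j => x (lin l1 + j)%N) (i - lout l1).
Proof.
case: (ltnP i (lout l1 + lout l2)) => [lt_i | le_i]; last first.
  have le1 : (lout l1 <= i)%N := leq_trans (leq_addr _ _) le_i.
  by rewrite ltnNge le1 /= !affv_out // leq_subRL.
have [{lt_i}i -> //] : exists i' : 'I_(lout l1 + lout l2), i = i' by exists (Ordinal lt_i).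
rewrite /affv /= big_split_ord /= ent_col -(fintype.splitK i).
case: (fintype.split i) => k /=.
- rewrite ltn_ord col_mxEu ent_col.
  under eq_bigr => j _ do rewrite (entE _ (lshift _ k) (lshift _ j)) block_mxEul.
  under [X in _ + X + _]eq_bigr => j _ do
    rewrite (entE _ (lshift _ k) (rshift _ j)) block_mxEur mxE mul0r.
  by rewrite big1_eq addr0; congr (_ + _); apply: eq_bigr => j _; rewrite entE.
- rewrite ltnNge leq_addr /= addKn col_mxEd ent_col.
  under eq_bigr => j _ do rewrite (entE _ (rshift _ k) (lshift _ j)) block_mxEdl mxE mul0r.
  under [X in _ + X + _]eq_bigr => j _ do
    rewrite (entE _ (rshift _ k) (rshift _ j)) block_mxEdr.
  by rewrite big1_eq add0r; congr (_ + _); apply: eq_bigr => j _; rewrite entE.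
Qed.

Lemma affv_scalar_layer (w : 'M[R]_1) (B : 'cV[R]_1) x k :
  affv (Layer w B) x k = if k == 0%N then w ord0 ord0 * x 0%N + B ord0 ord0 else 0.
Proof.
case: k => [|k]; last by rewrite affv_out.
by rewrite /affv /= big_ord1 (entE w ord0 ord0) (ent_col B ord0).
Qed.

Definition id_layer : layer R := Layer (1%:M : 'M[R]_1) 0.
Definition shift_layer (beta : R) : layer R :=
  Defs.merge id_layer (Layer (1%:M : 'M[R]_1) beta%:M).
Definition scale_layer (lambda : R) : layer R :=
  Defs.merge (Layer (lambda%:M : 'M[R]_1) 0) id_layer.

Lemma scaled_shift_netE (beta lambda : R) :
  smul lambda (ncomp (idnet R 1) (affA1 1 beta))
  = Some [:: shift_layer beta; scale_layer lambda].
Proof. by []. Qed.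

Lemma affv_shift_layer beta x k :
  affv (shift_layer beta) x k = if k == 0%N then x 0%N + beta else 0.
Proof.
rewrite affv_merge !affv_scalar_layer; case: k => //=.
by rewrite !mxE /= !mul1r mulr1n addr0.
Qed.

Lemma affv_scale_layer lambda x k :
  affv (scale_layer lambda) x k = if k == 0%N then lambda * x 0%N else 0.
Proof.
rewrite affv_merge !affv_scalar_layer; case: k => //=.
by rewrite !mxE /= !mul1r mulr1n !addr0.
Qed.


Definition fanout_layer n : layer R :=
  Layer (\matrix_(i < 1 * n, j < 1) ((j : nat) == (i %% 1)%N)%:R) (0 : 'cV[R]_(1 * n)).
Definition sum_layer n : layer R :=
  Layer (\matrix_(i < 1, j < 1 * n) ((i : nat) == (j %% 1)%N)%:R) (0 : 'cV[R]_1).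

Lemma TnetE n : Tnet R 1 n = Some [:: fanout_layer n].
Proof. by []. Qed.

Lemma SnetE n : Snet R 1 n = Some [:: sum_layer n].
Proof. by []. Qed.

Lemma affv_fanout_layer n y k :
  affv (fanout_layer n) y k = if (k < n)%N then y 0%N else 0.
Proof.
case: ltnP => [lt_kn | ?]; last by rewrite affv_out //= mul1n.
have {}lt_kn : (k < 1 * n)%N by rewrite mul1n.
have [{lt_kn}k -> //] : exists k' : 'I_(1 * n), k = k' by exists (Ordinal lt_kn).
by rewrite /affv /= big_ord1 (entE _ k ord0) ent0 mxE modn1 mul1r addr0.
Qed.

Lemma affv_sum_layer n z : affv (sum_layer n) z 0%N = \sum_(j < n) z j.
Proof.
rewrite /affv /= ent0 addr0.
under eq_bigr => j _ do rewrite (entE _ ord0 j) mxE modn1 mul1r.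
by rewrite -(big_mkord xpredT z) mul1n big_mkord.
Qed.

Lemma ncompE (Phi1 Phi2 : ann R) :
  is_ann Phi1 -> is_ann Phi2 -> inD Phi1 = outD Phi2 ->
  ncomp (Some Phi1) (Some Phi2) = Some (comp_raw Phi1 Phi2).
Proof. by move=> ann1 ann2 io; rewrite /ncomp ann1 ann2 io eqxx. Qed.

Lemma osequence_map_Some (Phis : seq (ann R)) : osequence (map Some Phis) = Some Phis.
Proof. by elim: Phis => //= Phi Phis ->. Qed.

Section ParallelTwoLayer.
Variables (A B : nat -> layer R) (f g : nat -> R -> R).
Hypotheses (linA : forall i, lin (A i) = 1%N) (loutA : forall i, lout (A i) = 1%N).
Hypotheses (linB : forall i, lin (B i) = 1%N) (loutB : forall i, lout (B i) = 1%N).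
Hypothesis affvA : forall i x k, affv (A i) x k = if k == 0%N then f i (x 0%N) else 0.
Hypothesis affvB : forall i x k, affv (B i) x k = if k == 0%N then g i (x 0%N) else 0.

Lemma par_raw_two_layer (s : seq nat) : s != [::] -> exists P1 P2,
  par_raw [seq [:: A i; B i] | i <- s] = [:: P1; P2] /\
  [/\ lin P1 = size s, lout P1 = size s, lin P2 = size s & lout P2 = size s] /\
  (forall x k, affv P1 x k = if (k < size s)%N then f (nth 0%N s k) (x k) else 0) /\
  (forall x k, affv P2 x k = if (k < size s)%N then g (nth 0%N s k) (x k) else 0).
Proof.
elim: s => [//|i [|j s] IH] _.
  exists (A i), (B i); split=> //; rewrite linA loutA linB loutB.
  by split=> //; split=> x [|k]; rewrite ?affvA ?affvB.
have [P1 [P2 [eP [[in1 out1 in2 out2] [affv1 affv2]]]]] := IH isT.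
exists (par_layer (A i) P1), (par_layer (B i) P2).
rewrite map_cons; set rest := map _ (j :: s).
have -> : par_raw ([:: A i; B i] :: rest)
  = [seq par_layer p.1 p.2 | p <- zip [:: A i; B i] (par_raw rest)] by [].
rewrite eP /=; split=> //.
rewrite linA loutA linB loutB in1 out1 in2 out2; split=> //.
split=> x [|k]; rewrite affv_par_layer ?affvA ?affvB ?loutA ?loutB //=.
  by rewrite affv1 linA subn1.
by rewrite affv2 linB subn1.
Qed.

End ParallelTwoLayer.

Lemma oplusE (Phi : ann R) Phis :
  all (fun Phi' => [&& size Phi' == size Phi, inD Phi' == inD Phi &
                       outD Phi' == outD Phi]) (Phi :: Phis) ->
  oplus (map Some (Phi :: Phis)) =
  ncomp (Snet R (outD Phi) (size Phis).+1)
        (ncomp (par (Phi :: Phis)) (Tnet R (inD Phi) (size Phis).+1)).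
Proof. by move=> same_shape; rewrite /oplus osequence_map_Some same_shape. Qed.

Lemma oplus_scaled_shifts (b c : nat -> R) n : (0 < n)%N -> exists L1 L2 : layer R,
  oplus [seq smul (c i) (ncomp (idnet R 1) (affA1 1 (b i))) | i <- iota 1 n]
    = Some [:: L1; L2] /\
  [/\ lin L1 = 1, lout L1 = n, lin L2 = n & lout L2 = 1]%N /\
  (forall x k, (k < n)%N -> affv L1 x k = x 0%N + b k.+1) /\
  (forall z, affv L2 z 0%N = \sum_(j < n) c j.+1 * z j).
Proof.
case: n => // n _.
have [//|P1 [P2 [eP [[in1 out1 in2 out2] [affv1 affv2]]]]] :=
  @par_raw_two_layer (fun i => shift_layer (b i)) (fun i => scale_layer (c i))
    (fun i t => t + b i) (fun i t => c i * t) (fun _ => erefl) (fun _ => erefl)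
    (fun _ => erefl) (fun _ => erefl) (fun i => affv_shift_layer (b i))
    (fun i => affv_scale_layer (c i)) (iota 1 n.+1).
rewrite size_iota in in1 out1 in2 out2 affv1 affv2.
set nets := map _ (iota 1 n.+1) in eP.
have -> : [seq smul (c i) (ncomp (idnet R 1) (affA1 1 (b i))) | i <- iota 1 n.+1]
    = map Some nets.
  by rewrite -map_comp; apply: eq_map => i; apply: scaled_shift_netE.
have netsE : nets = [:: shift_layer (b 1%N); scale_layer (c 1%N)]
                    :: [seq [:: shift_layer (b i); scale_layer (c i)] | i <- iota 2 n] by [].
have parP : par nets = Some [:: P1; P2].
  by rewrite /par ifT -?eP // netsE /= !all_map; apply/andP; split; apply/allP.
rewrite netsE oplusE; last by rewrite /= all_map; apply/allP.
rewrite -netsE parP size_map size_iota TnetE SnetE.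
have annP : is_ann [:: P1; P2] by rewrite /is_ann /= out1 in2 eqxx.
rewrite ncompE //; last by rewrite /= in1 /outD /= mul1n.
rewrite ncompE //=; last by rewrite /outD /= out2 mul1n.
exists (Defs.merge P1 (fanout_layer n.+1)), (Defs.merge (sum_layer n.+1) P2).
split=> //; split=> //; split=> [x k lt_kn | z].
  by rewrite affv_merge affv1 lt_kn affv_fanout_layer lt_kn nth_iota.
rewrite affv_merge affv_sum_layer; apply: eq_bigr => j _.
by rewrite affv2 ltn_ord nth_iota.
Qed.

Lemma scaled_shift_sum_net (b c : nat -> R) n : (0 < n)%N -> exists Psi : ann R,
  ncomp (affA1 1 (c 0%N))
    (oplus [seq smul (c i) (ncomp (idnet R 1) (affA1 1 (b i))) | i <- iota 1 n])
    = Some Psi /\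
  is_ann Psi /\ dims Psi = [:: 1%N; n; 1%N] /\
  forall a x, realize1 a Psi x = c 0%N + \sum_(j < n) c j.+1 * a (x + b j.+1).
Proof.
move=> n_gt0; have [L1 [L2 [-> [[in1 out1 in2 out2] [affv1 affv2]]]]] :=
  oplus_scaled_shifts b c n_gt0.
have annL : is_ann [:: L1; L2] by rewrite /is_ann /= out1 in2 eqxx.
rewrite /affA1 /affA ncompE //=.
eexists; split; first by [].
split; first by rewrite /is_ann /= out1 in2 eqxx.
split; first by rewrite /= in1 out1.
move=> a x; rewrite /realize1 [realize_raw _ _ _]/= affv_merge affv_scalar_layer /= affv2.
rewrite !mxE mulr1n mul1r addrC; congr (_ + _); apply: eq_bigr => j _.
by rewrite affv1.
Qed.

End Realization.

Theorem mainTheorem9 (R : realType) (gamma : nat)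
  (hg0 : (0 < gamma)%N) (hg1 : gamma != 1%N)
  (b : nat -> R)
  (hb : forall i j : nat, (1 <= i)%N -> (i < j)%N -> (j <= gamma)%N -> b i < b j)
  (a : R -> R) (ha_cont : continuous a) (ha : forall x : R, a x = x ^+ gamma) :
  let cond (c : nat -> R) : Prop :=
    forall k : nat, (k <= gamma)%N ->
      (k == gamma)%:R * c 0%N + \sum_(1 <= i < gamma.+1) c i * b i ^+ k
      = (k == gamma - 1)%N%:R / gamma%:R in
  exists c : nat -> R,
    cond c /\
    (forall c' : nat -> R, cond c' -> forall i : nat, (i <= gamma)%N -> c' i = c i) /\
    exists Psi : ann R,
      ncomp (affA1 1 (c 0%N))
           (oplus [seq smul (c i) (ncomp (idnet R 1) (affA1 1 (b i)))
                  | i <- iota 1 gamma]) = Some Psi /\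
      is_ann Psi /\
      dims Psi = [:: 1%N; gamma; 1%N] /\
      continuous (realize1 a Psi) /\
      (forall x : R, realize1 a Psi x = x).
Proof.
move=> cond.
have distinct_b i j : (1 <= i)%N -> (i < j)%N -> (j <= gamma)%N -> b i != b j.
  by move=> *; rewrite lt_eqF ?hb.
have [c [sol sol_unique]] := moment_system_unique_solution
  (fun k => (k == gamma - 1)%N%:R / gamma%:R) distinct_b.
exists c; split; first exact: sol.
split; first exact: sol_unique.
have [Psi [netP [annP [dimsP realP]]]] := scaled_shift_sum_net b c hg0.
have realize_id : realize1 a Psi = id.
  apply: funext => x; rewrite realP.
  under eq_bigr do rewrite ha.
  exact: moment_system_shift_sum.
exists Psi; do 3!split=> //.
by rewrite realize_id; split=> // x.
Qed.
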